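(* For each pair of integers $k\ge l\ge0$, $S_u^{k-l+1}$ annihilates $\mathcal{H}_{k,l}(\mathbb{R}^{2m},\mathbb{C})$, whereas for every integer $0\le j\le k-l$ the operator $S_u^j$ is not identically zero on $\mathcal{H}_{k,l}(\mathbb{R}^{2m},\mathbb{C})$.
   Context: Fix an integer $m>4$. For $x,u\in\mathbb{R}^m$ let $\mathcal{P}_{p,q}(\mathbb{R}^{2m},\mathbb{C})$ be complex polynomials of degree $p$ in $x$ and $q$ in $u$. Write $|x|^2=\sum x_j^2$, $|u|^2$ similarly, $\Delta_x=\sum\partial_{x_j}^2$, $\Delta_u=\sum\partial_{u_j}^2$, $\langle\partial_u,\partial_x\rangle=\sum\partial_{u_j}\partial_{x_j}$, $\langle x,\partial_u\rangle=\sum x_j\partial_{u_j}$, $\langle u,\partial_x\rangle=\sum u_j\partial_{x_j}$, $\ker(D_1,\dots,D_r)=\bigcap\ker D_i$. Every $P\in\mathcal{P}_{p,q}$ is uniquely $\sum_{a,b\ge0}|x|^{2a}|u|^{2b}H'_{p-2a,q-2b}$ with $H'_{p-2a,q-2b}\in\mathcal{P}_{p-2a,q-2b}\cap\ker(\Delta_x,\Delta_u)$; $\pi_{\mathfrak{s}}P:=H'_{p,q}$. $S_u=\pi_{\mathfrak{s}}\langle u,\partial_x\rangle$ on $\ker(\Delta_x,\Delta_u)$. For $k\ge l\ge0$, $\mathcal{H}_{k,l}=\mathcal{P}_{k,l}\cap\ker(\Delta_x,\Delta_u,\langle\partial_u,\partial_x\rangle,\langle x,\partial_u\rangle)$. 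*)

From HB Require Import structures.
From mathcomp Require Import all_boot all_algebra.
From mathcomp Require Import Rstruct complex.
From mathcomp Require Import mpoly.
From Stdlib Require Import ClassicalEpsilon.
Set Implicit Arguments. Unset Strict Implicit. Unset Printing Implicit Defensive.
Import GRing.Theory.
Local Open Scope ring_scope.

Definition C : fieldType := complex Rdefinitions.R.

Section Defs.
Variable m : nat.

(* complex polynomials on R^{2m}: variables x_1..x_m are indices lshift m j,
   u_1..u_m are indices rshift m j, j : 'I_m *)
Definition Pol := {mpoly C[m + m]}.

Definition xi (j : 'I_m) : 'I_(m + m) := lshift m j.
Definition ui (j : 'I_m) : 'I_(m + m) := rshift m j.

Definition bihomog (p q : nat) (P : Pol) : Prop :=
  forall mon : 'X_{1.. m + m}, mon \in msupp P ->
    (\sum_(j < m) mon (xi j))%N = p /\ (\sum_(j < m) mon (ui j))%N = q.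

Definition dx (j : 'I_m) (P : Pol) : Pol := mderiv (xi j) P.
Definition du (j : 'I_m) (P : Pol) : Pol := mderiv (ui j) P.

Definition Lap_x (P : Pol) : Pol := \sum_(j < m) dx j (dx j P).
Definition Lap_u (P : Pol) : Pol := \sum_(j < m) du j (du j P).
Definition Du_Dx (P : Pol) : Pol := \sum_(j < m) du j (dx j P).
Definition X_Du (P : Pol) : Pol := \sum_(j < m) 'X_(xi j) * du j P.
Definition U_Dx (P : Pol) : Pol := \sum_(j < m) 'X_(ui j) * dx j P.

Definition normx2 : Pol := \sum_(j < m) 'X_(xi j) ^+ 2.
Definition normu2 : Pol := \sum_(j < m) 'X_(ui j) ^+ 2.

(* pi_s P = H'_{p,q}: the (unique) component H in ker(Lap_x, Lap_u) with
   P = H + |x|^2 A + |u|^2 B (all terms with a >= 1 or b >= 1 of the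
   decomposition P = sum |x|^{2a}|u|^{2b} H'_{p-2a,q-2b} are of this form),
   required to lie in P_{p,q} when P does. *)
Definition pi_s_spec (P H : Pol) : Prop :=
  (forall p q, bihomog p q P -> bihomog p q H) /\
  Lap_x H = 0 /\ Lap_u H = 0 /\
  exists A B : Pol, P = H + normx2 * A + normu2 * B.

Definition pi_s (P : Pol) : Pol := epsilon (inhabits 0) (pi_s_spec P).

Definition S_u (P : Pol) : Pol := pi_s (U_Dx P).

Definition Hkl (k l : nat) (P : Pol) : Prop :=
  bihomog k l P /\ Lap_x P = 0 /\ Lap_u P = 0 /\ Du_Dx P = 0 /\ X_Du P = 0.

End Defs.

(* On [ker(Lap_x, Lap_u, <∂u,∂x>)], which [<u,∂x>] preserves, the projection [pi_s]
   is the identity (multiplication by [|x|^2], [|u|^2] is Fischer-adjoint to the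
   Laplacians), so [S_u^j = <u,∂x>^j] on [H_{k,l}].  The operators [<u,∂x>], [<x,∂u>]
   and [E_x - E_u] form an [sl_2]-triple, whence
   [<x,∂u> <u,∂x>^(j+1) H = (j+1)(k-l-j) <u,∂x>^j H] for [H] in [H_{k,l}].
   As [<u,∂x>] is Fischer-adjoint to [<x,∂u>], [G = <u,∂x>^(k-l+1) H] satisfies
   [|<u,∂x> G|^2 = -(k-l+2) |G|^2], hence [G = 0]; and since [(j+1)(k-l-j) <> 0] for
   [j < k-l], no [<u,∂x>^j H] with [j <= k-l] vanishes when [H <> 0].  A nonzero element
   of [H_{k,l}] is [(a.x)^(k-l) ((a.x)(b.u) - (b.x)(a.u))^l] with [a = e1 + i e2],
   [b = e3 + i e4] isotropic and orthogonal. *)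

From HB Require Import structures.
From mathcomp Require Import all_boot all_order all_algebra.
From mathcomp Require Import mpoly complex Rstruct ring.
From Stdlib Require Import ClassicalEpsilon.
Set Implicit Arguments. Unset Strict Implicit. Unset Printing Implicit Defensive.
Import Order.TTheory GRing.Theory Num.Theory.
Local Open Scope ring_scope.

Section MpolyDerivations.
Variables (R : comNzRingType) (n : nat).
Implicit Types (p q : {mpoly R[n]}) (i j : 'I_n).

Lemma mderivXM i j p : mderiv i ('X_j * p) = (j == i)%:R *: p + 'X_j * mderiv i p.
Proof.
rewrite mderivM mderivX mnm1E.
case: (eqVneq j i) => [->|ne] /=; last by rewrite mulr0n !scale0r mul0r.
have -> : (U_(i) - U_(i))%MM = 0%MM by apply/mnmP=> k; rewrite mnmBE mnm0E subnn.
by rewrite mpolyX0 !scale1r mul1r.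
Qed.

Lemma mderiv_sum i (J : Type) (r : seq J) (P : pred J) (F : J -> {mpoly R[n]}) :
  mderiv i (\sum_(j <- r | P j) F j) = \sum_(j <- r | P j) mderiv i (F j).
Proof. exact: raddf_sum. Qed.

Lemma mderivXi i j : mderiv i ('X_j : {mpoly R[n]}) = (j == i)%:R.
Proof. by rewrite -[X in mderiv _ X]mulr1 mderivXM mderivC mulr0 addr0 scaler_nat. Qed.

Lemma mderiv1 i : mderiv i (1 : {mpoly R[n]}) = 0.
Proof. by rewrite -mpolyC1 mderivC. Qed.

Lemma mulX_mderivX i (mn : 'X_{1..n}) :
  'X_i * mderiv i ('X_[mn] : {mpoly R[n]}) = (mn i)%:R *: 'X_[mn].
Proof.
rewrite mderivX -scalerAr -mpolyXD.
have [->|nz] := eqVneq (mn i) 0%N; first by rewrite !scale0r.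
congr (_ *: 'X_[_]); apply/mnmP => k; rewrite mnmDE mnmBE mnm1E.
case: (eqVneq i k) => [<-|_] /=; last by rewrite subn0.
by rewrite subnKC // lt0n.
Qed.

Lemma mpoly_euler (I : finType) (s : I -> 'I_n) (d : nat) p :
  (forall mn, mn \in msupp p -> (\sum_(j : I) mn (s j))%N = d) ->
  \sum_(j : I) 'X_(s j) * mderiv (s j) p = d%:R *: p.
Proof.
move=> hp; rewrite [in RHS](mpolyE p) scaler_sumr.
under eq_bigr => j _ do
  rewrite [in X in mderiv _ X](mpolyE p) raddf_sum mulr_sumr.
rewrite exchange_big /= big_seq [in RHS]big_seq; apply: eq_bigr => mn hmn.
under eq_bigr do rewrite mderivZ -scalerAr mulX_mderivX scalerA.
by rewrite -scaler_suml -mulr_sumr -natr_sum hp // scalerA mulrC.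
Qed.

End MpolyDerivations.

Section SecondOrderOperators.
Variables (R : comNzRingType) (n : nat) (I : finType) (s t : I -> 'I_n).
Implicit Types (p q : {mpoly R[n]}).

Definition dlap p : {mpoly R[n]} := \sum_j mderiv (s j) (mderiv (t j) p).

Definition dgamma p q : {mpoly R[n]} :=
  \sum_j (mderiv (t j) p * mderiv (s j) q + mderiv (s j) p * mderiv (t j) q).

Lemma dlapD p q : dlap (p + q) = dlap p + dlap q.
Proof. by rewrite /dlap -big_split; apply: eq_bigr => j _; rewrite !mderivD. Qed.

Lemma dlapM p q : dlap (p * q) = dlap p * q + p * dlap q + dgamma p q.
Proof.
rewrite /dlap /dgamma mulr_suml mulr_sumr -!big_split /=; apply: eq_bigr => j _.
rewrite !mderivM !mderivD !mderivM; ring.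
Qed.

Lemma dlapC c : dlap c%:MP = 0.
Proof. by rewrite /dlap big1 // => j _; rewrite mderivC mderiv0. Qed.

Lemma dgammaC p q : dgamma p q = dgamma q p.
Proof. by rewrite /dgamma; apply: eq_bigr => j _; ring. Qed.

Lemma dgammaDl p1 p2 q : dgamma (p1 + p2) q = dgamma p1 q + dgamma p2 q.
Proof. by rewrite /dgamma -big_split /=; apply: eq_bigr => j _; rewrite !mderivD; ring. Qed.

Lemma dgammaMl p1 p2 q : dgamma (p1 * p2) q = p1 * dgamma p2 q + p2 * dgamma p1 q.
Proof.
rewrite /dgamma !mulr_sumr -big_split /=; apply: eq_bigr => j _.
rewrite !mderivM; ring.
Qed.

Lemma dgammaCl c q : dgamma c%:MP q = 0.
Proof. by rewrite /dgamma big1 // => j _; rewrite !mderivC !mul0r addr0. Qed.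

End SecondOrderOperators.

Inductive generated (R : comNzRingType) (n : nat) (G : {mpoly R[n]} -> Prop) :
  {mpoly R[n]} -> Prop :=
| generatedC c : generated G c%:MP
| generated_gen g : G g -> generated G g
| generatedD p q : generated G p -> generated G q -> generated G (p + q)
| generatedM p q : generated G p -> generated G q -> generated G (p * q).

Section Generated.
Variables (R : comNzRingType) (n : nat) (G : {mpoly R[n]} -> Prop).

Lemma generatedB p q : generated G p -> generated G q -> generated G (p - q).
Proof.
move=> hp hq; have -> : p - q = p + (-1)%:MP * q by rewrite rmorphN1 mulN1r.
by apply: generatedD => //; apply: generatedM => //; apply: generatedC.
Qed.

Lemma generatedX p k : generated G p -> generated G (p ^+ k).
Proof.
move=> hp; elim: k => [|k IH]; first by rewrite expr0 -mpolyC1; apply: generatedC.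
by rewrite exprS; apply: generatedM.
Qed.

Lemma dlap_generated (I : finType) (s t : I -> 'I_n) :
  (forall g g', G g -> G g' -> dgamma s t g g' = 0) ->
  (forall g, G g -> dlap s t g = 0) ->
  forall p, generated G p -> dlap s t p = 0.
Proof.
move=> hGG hG.
have gamma_gen p : generated G p -> forall g, G g -> dgamma s t p g = 0.
  elim=> [c|g' hg'|p1 p2 _ IH1 _ IH2|p1 p2 _ IH1 _ IH2] g hg.
  - exact: dgammaCl.
  - exact: hGG.
  - by rewrite dgammaDl IH1 ?IH2 ?addr0.
  - by rewrite dgammaMl IH1 ?IH2 ?mulr0 ?addr0.
have gamma_gen2 p q : generated G p -> generated G q -> dgamma s t p q = 0.
  move=> hp; elim=> [c|g hg|q1 q2 _ IH1 _ IH2|q1 q2 _ IH1 _ IH2].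
  - by rewrite dgammaC dgammaCl.
  - exact: gamma_gen.
  - by rewrite dgammaC dgammaDl -!(dgammaC _ _ p) IH1 IH2 addr0.
  - by rewrite dgammaC dgammaMl -!(dgammaC _ _ p) IH1 IH2 !mulr0 addr0.
move=> p; elim=> [c|g hg|p1 p2 _ IH1 _ IH2|p1 p2 hp1 IH1 hp2 IH2].
- exact: dlapC.
- exact: hG.
- by rewrite dlapD IH1 IH2 addr0.
- by rewrite dlapM IH1 IH2 gamma_gen2 // mul0r mulr0 !addr0.
Qed.

End Generated.

Lemma eq_big_supp (V : nmodType) (T : eqType) (r1 r2 : seq T) (f : T -> V) :
  uniq r1 -> uniq r2 -> (forall x, f x != 0 -> (x \in r1) && (x \in r2)) ->
  \sum_(x <- r1) f x = \sum_(x <- r2) f x.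
Proof.
move=> u1 u2 h.
have nz r : \sum_(x <- r) f x = \sum_(x <- [seq x <- r | f x != 0]) f x.
  by rewrite big_filter [RHS]big_mkcond /=; apply: eq_bigr => x _; case: eqP => [->|].
rewrite (nz r1) (nz r2); apply/perm_big/uniq_perm; rewrite ?filter_uniq // => x.
by rewrite !mem_filter; case: (boolP (f x != 0)) => //= /h /andP[-> ->].
Qed.

Section FischerProduct.
Variables (K : numClosedFieldType) (n : nat).
Implicit Types (p q : {mpoly K[n]}).

Definition mfact (mn : 'X_{1..n}) : nat := (\prod_(i < n) (mn i)`!)%N.

(* The Fischer inner product [<p, q> = (p(∂) conj(q))(0)]. *)
Definition fischer p q : K := \sum_(mn <- msupp p) p@_mn * (q@_mn)^* * (mfact mn)%:R.

Lemma fischer_supp p q (r : seq 'X_{1..n}) : uniq r ->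
  (forall mn, p@_mn != 0 -> q@_mn != 0 -> mn \in r) ->
  fischer p q = \sum_(mn <- r) p@_mn * (q@_mn)^* * (mfact mn)%:R.
Proof.
move=> ur hr; apply: eq_big_supp; rewrite ?msupp_uniq // => mn.
have [->|pn0] := eqVneq p@_mn 0; first by rewrite !mul0r eqxx.
have [->|qn0] := eqVneq q@_mn 0; first by rewrite conjC0 mulr0 mul0r eqxx.
by rewrite mcoeff_msupp pn0 hr.
Qed.

Lemma fischerDl p1 p2 q : fischer (p1 + p2) q = fischer p1 q + fischer p2 q.
Proof.
set r := undup (msupp p1 ++ msupp p2); have ur : uniq r by exact: undup_uniq.
have in_r mn : p1@_mn != 0 \/ p2@_mn != 0 -> mn \in r.
  by rewrite mem_undup mem_cat !mcoeff_msupp => -[->|->]; rewrite ?orbT.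
rewrite !(fischer_supp (r := r)) // => [|mn h _|mn h _|mn]; last first.
- rewrite mcoeffD => h _; apply: in_r.
  by case: (eqVneq p1@_mn 0) h => [->|]; [rewrite add0r; right|left].
- by apply: in_r; left.
- by apply: in_r; right.
by rewrite -big_split; apply: eq_bigr => mn _ /=; rewrite mcoeffD !mulrDl.
Qed.

Lemma fischerZl c p q : fischer (c *: p) q = c * fischer p q.
Proof.
rewrite (fischer_supp (r := msupp p)) ?msupp_uniq // => [|mn]; last first.
  by rewrite mcoeffZ mcoeff_msupp => h _; apply: contraNneq h => ->; rewrite mulr0.
by rewrite /fischer mulr_sumr; apply: eq_bigr => mn _; rewrite mcoeffZ !mulrA.
Qed.

Lemma fischer0l q : fischer 0 q = 0.
Proof. by rewrite /fischer msupp0 big_nil. Qed.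

Lemma fischer_suml (J : Type) (s : seq J) (f : J -> {mpoly K[n]}) q :
  fischer (\sum_(j <- s) f j) q = \sum_(j <- s) fischer (f j) q.
Proof.
elim: s => [|j s IH]; first by rewrite !big_nil fischer0l.
by rewrite !big_cons fischerDl IH.
Qed.

Lemma fischerC p q : fischer p q = (fischer q p)^*.
Proof.
set r := undup (msupp p ++ msupp q); have ur : uniq r by exact: undup_uniq.
rewrite (fischer_supp (r := r)) // => [|mn h _]; last first.
  by rewrite mem_undup mem_cat mcoeff_msupp h.
rewrite (fischer_supp (p := q) (r := r)) // => [|mn _ h]; last first.
  by rewrite mem_undup mem_cat mcoeff_msupp h.
rewrite rmorph_sum; apply: eq_bigr => mn _ /=.
by rewrite !rmorphM /= conjCK conjC_nat [p@_mn * _]mulrC.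
Qed.

Lemma fischerZr c p q : fischer p (c *: q) = c^* * fischer p q.
Proof. by rewrite fischerC fischerZl rmorphM /= -fischerC. Qed.

Lemma fischer0r p : fischer p 0 = 0.
Proof. by rewrite fischerC fischer0l conjC0. Qed.

Lemma fischer_sumr (J : Type) (s : seq J) (f : J -> {mpoly K[n]}) p :
  fischer p (\sum_(j <- s) f j) = \sum_(j <- s) fischer p (f j).
Proof.
by rewrite fischerC fischer_suml rmorph_sum; apply: eq_bigr => j _; rewrite [RHS]fischerC.
Qed.

Lemma mfactD1 (i : 'I_n) mn : mfact (U_(i) + mn)%MM = ((mn i).+1 * mfact mn)%N.
Proof.
rewrite /mfact (bigD1 i) //= [in RHS](bigD1 i) //= mnmDE mnm1E eqxx add1n factS mulnA.
by congr (_ * _)%N; apply: eq_bigr => k hk; rewrite mnmDE mnm1E eq_sym (negbTE hk).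
Qed.

Lemma fischerXl (i : 'I_n) p q : fischer ('X_i * p) q = fischer p (mderiv i q).
Proof.
rewrite /fischer mulrC (perm_big _ (msuppMX p U_(i))) big_map.
apply: eq_bigr => mn _.
rewrite mcoeffMX mcoeff_deriv [(mn + _)%MM]addmC mfactD1 rmorphMn /= natrM.
rewrite -mulr_natr -mulr_natr; ring.
Qed.

Lemma fischerXr (i : 'I_n) p q : fischer p ('X_i * q) = fischer (mderiv i p) q.
Proof. by rewrite fischerC fischerXl -fischerC. Qed.

Lemma fischer_ge0 p : 0 <= fischer p p.
Proof. by apply: sumr_ge0 => mn _; rewrite mulr_ge0 ?mul_conjC_ge0 ?ler0n. Qed.

Lemma fischer_eq0 p : (fischer p p == 0) = (p == 0).
Proof.
apply/idP/eqP => [|->]; last by rewrite fischer0l.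
rewrite psumr_eq0 => [/allP hp|mn _]; last by rewrite mulr_ge0 ?mul_conjC_ge0 ?ler0n.
apply/mpolyP => mn; rewrite mcoeff0; apply/eqP.
case: (boolP (mn \in msupp p)) => [/hp /=|]; last by rewrite mcoeff_msupp negbK.
have mfact_gt0 : (0 < mfact mn)%N by rewrite prodn_gt0 // => k; rewrite fact_gt0.
by rewrite mulf_eq0 mul_conjC_eq0 pnatr_eq0 eqn0Ngt mfact_gt0 orbF.
Qed.

End FischerProduct.

Local Notation fdot := (@fischer (complex Rdefinitions.R) _).

Section OperatorIdentities.
Variable m : nat.
Local Notation P := (Pol m).
Implicit Types (p q : P) (a : 'I_m).

Lemma eq_xi a b : (xi a == xi b) = (a == b). Proof. exact: eq_lshift. Qed.
Lemma eq_ui a b : (ui a == ui b) = (a == b). Proof. exact: eq_shift.1.1.2. Qed.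
Lemma eq_xi_ui a b : (xi a == ui b) = false. Proof. exact: eq_lrshift. Qed.
Lemma eq_ui_xi a b : (ui a == xi b) = false. Proof. exact: eq_rlshift. Qed.

Lemma sum_delta a (g : 'I_m -> P) : \sum_(b < m) (b == a)%:R *: g b = g a.
Proof.
rewrite (bigD1 a) //= eqxx scale1r big1 ?addr0 // => b /negbTE ->.
by rewrite scale0r.
Qed.

Lemma U_Dx_is_linear : linear (@U_Dx m).
Proof.
move=> c p q; rewrite /U_Dx scaler_sumr -big_split; apply: eq_bigr => j _ /=.
by rewrite /dx linearP mulrDr scalerAr.
Qed.
HB.instance Definition _ :=
  GRing.isLinear.Build C P P *:%R (@U_Dx m) U_Dx_is_linear.

Lemma U_Dx_sum (J : Type) (r : seq J) (F : J -> P) :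
  U_Dx (\sum_(j <- r) F j) = \sum_(j <- r) U_Dx (F j).
Proof. exact: raddf_sum. Qed.

Lemma X_Du_is_linear : linear (@X_Du m).
Proof.
move=> c p q; rewrite /X_Du scaler_sumr -big_split; apply: eq_bigr => j _ /=.
by rewrite /du linearP mulrDr scalerAr.
Qed.
HB.instance Definition _ :=
  GRing.isLinear.Build C P P *:%R (@X_Du m) X_Du_is_linear.

Definition euler_x p : P := \sum_(j < m) 'X_(xi j) * dx j p.
Definition euler_u p : P := \sum_(j < m) 'X_(ui j) * du j p.

Lemma euler_x_bihomog d e p : bihomog d e p -> euler_x p = d%:R *: p.
Proof. by move=> h; apply: mpoly_euler => mn /h []. Qed.

Lemma euler_u_bihomog d e p : bihomog d e p -> euler_u p = e%:R *: p.
Proof. by move=> h; apply: mpoly_euler => mn /h []. Qed.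

Lemma dx_U_Dx a p : dx a (U_Dx p) = U_Dx (dx a p).
Proof.
rewrite /U_Dx /dx mderiv_sum; apply: eq_bigr => j _.
by rewrite mderivXM eq_ui_xi scale0r add0r mderiv_comm.
Qed.

Lemma du_U_Dx a p : du a (U_Dx p) = dx a p + U_Dx (du a p).
Proof.
rewrite /U_Dx /dx /du mderiv_sum.
under eq_bigr do rewrite mderivXM eq_ui (mderiv_comm _ (ui a)).
by rewrite big_split /= sum_delta.
Qed.

Lemma U_Dx_mulXx a p : U_Dx ('X_(xi a) * p) = 'X_(ui a) * p + 'X_(xi a) * U_Dx p.
Proof.
rewrite /U_Dx /dx mulr_sumr.
under eq_bigr do rewrite mderivXM eq_xi mulrDr -scalerAr mulrCA eq_sym.
by rewrite big_split /= sum_delta.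
Qed.

Lemma U_Dx_mulXu a p : U_Dx ('X_(ui a) * p) = 'X_(ui a) * U_Dx p.
Proof.
rewrite /U_Dx /dx mulr_sumr; apply: eq_bigr => j _.
by rewrite mderivXM eq_ui_xi scale0r add0r mulrCA.
Qed.

Lemma Lap_x_U_Dx p : Lap_x (U_Dx p) = U_Dx (Lap_x p).
Proof. by rewrite /Lap_x U_Dx_sum; apply: eq_bigr => a _; rewrite !dx_U_Dx. Qed.

Lemma Lap_u_U_Dx p : Lap_u (U_Dx p) = U_Dx (Lap_u p) + (Du_Dx p + Du_Dx p).
Proof.
rewrite /Lap_u /Du_Dx U_Dx_sum -!big_split /=; apply: eq_bigr => a _.
rewrite du_U_Dx [du a (_ + _)]mderivD -/(du a (U_Dx (du a p))) du_U_Dx.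
rewrite /du /dx [mderiv (xi a) (mderiv (ui a) p)]mderiv_comm.
by rewrite addrC addrA.
Qed.

Lemma Du_Dx_U_Dx p : Du_Dx (U_Dx p) = U_Dx (Du_Dx p) + Lap_x p.
Proof.
rewrite /Lap_x /Du_Dx U_Dx_sum -big_split /=; apply: eq_bigr => a _.
by rewrite dx_U_Dx du_U_Dx addrC.
Qed.

Lemma X_Du_U_Dx p : X_Du (U_Dx p) = U_Dx (X_Du p) + euler_x p - euler_u p.
Proof.
have -> : X_Du (U_Dx p) = euler_x p + \sum_a 'X_(xi a) * U_Dx (du a p).
  rewrite /X_Du /euler_x -big_split /=; apply: eq_bigr => a _.
  by rewrite du_U_Dx mulrDr.
have -> : U_Dx (X_Du p) = euler_u p + \sum_a 'X_(xi a) * U_Dx (du a p).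
  rewrite /X_Du /euler_u U_Dx_sum -big_split /=; apply: eq_bigr => a _.
  by rewrite U_Dx_mulXx.
ring.
Qed.

Lemma euler_x_U_Dx p : euler_x (U_Dx p) = U_Dx (euler_x p) - U_Dx p.
Proof.
have -> : U_Dx (euler_x p) = U_Dx p + \sum_a 'X_(xi a) * U_Dx (dx a p).
  rewrite /euler_x {2}/U_Dx U_Dx_sum -big_split /=; apply: eq_bigr => a _.
  by rewrite U_Dx_mulXx.
by rewrite addrC addKr /euler_x; apply: eq_bigr => a _; rewrite dx_U_Dx.
Qed.

Lemma euler_u_U_Dx p : euler_u (U_Dx p) = U_Dx (euler_u p) + U_Dx p.
Proof.
have -> : euler_u (U_Dx p) = U_Dx p + \sum_a 'X_(ui a) * U_Dx (du a p).
  rewrite /euler_u {2}/U_Dx -big_split /=; apply: eq_bigr => a _.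
  by rewrite du_U_Dx mulrDr.
rewrite addrC /euler_u U_Dx_sum; congr (_ + _); apply: eq_bigr => a _.
by rewrite U_Dx_mulXu.
Qed.

Lemma fischer_U_Dx p q : fdot (U_Dx p) q = fdot p (X_Du q).
Proof.
rewrite /U_Dx /X_Du fischer_suml fischer_sumr; apply: eq_bigr => j _.
by rewrite fischerXl fischerXr.
Qed.

Lemma fischer_normx2 p q : fdot (normx2 m * p) q = fdot p (Lap_x q).
Proof.
rewrite /normx2 mulr_suml fischer_suml /Lap_x fischer_sumr; apply: eq_bigr => j _.
by rewrite expr2 -mulrA !fischerXl.
Qed.

Lemma fischer_normu2 p q : fdot (normu2 m * p) q = fdot p (Lap_u q).
Proof.
rewrite /normu2 mulr_suml fischer_suml /Lap_u fischer_sumr; apply: eq_bigr => j _.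
by rewrite expr2 -mulrA !fischerXl.
Qed.

End OperatorIdentities.

Section SimplicialProjection.
Variable m : nat.
Local Notation P := (Pol m).
Implicit Types (p q : P).

Lemma Lap_xB p q : Lap_x (p - q) = Lap_x p - Lap_x q.
Proof. by rewrite /Lap_x -sumrB; apply: eq_bigr => j _; rewrite /dx !mderivB. Qed.

Lemma Lap_uB p q : Lap_u (p - q) = Lap_u p - Lap_u q.
Proof. by rewrite /Lap_u -sumrB; apply: eq_bigr => j _; rewrite /du !mderivB. Qed.

(* [|x|^2 P ⊕ |u|^2 P] is Fischer-orthogonal to [ker Lap_x ∩ ker Lap_u]. *)
Lemma pi_s_id p : Lap_x p = 0 -> Lap_u p = 0 -> pi_s p = p.
Proof.
move=> hx hu.
have : pi_s_spec p (pi_s p).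
  apply: epsilon_spec; exists p; do !split => //.
  by exists 0, 0; rewrite !mulr0 !addr0.
case=> _ [hHx [hHu [A [B hp]]]]; set H := pi_s p in hHx hHu hp *.
have hD : p - H = normx2 m * A + normu2 m * B by rewrite hp; ring.
have hDx : Lap_x (p - H) = 0 by rewrite Lap_xB hx hHx subr0.
have hDu : Lap_u (p - H) = 0 by rewrite Lap_uB hu hHu subr0.
have : fdot (p - H) (p - H) == 0.
  by rewrite {1}hD fischerDl fischer_normx2 fischer_normu2 hDx hDu !fischer0r addr0.
by rewrite fischer_eq0 subr_eq0 => /eqP.
Qed.

Definition ker_laplacians p : Prop := [/\ Lap_x p = 0, Lap_u p = 0 & Du_Dx p = 0].

Lemma ker_laplacians_U_Dx p : ker_laplacians p -> ker_laplacians (U_Dx p).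
Proof.
case=> hx hu hd; split.
- by rewrite Lap_x_U_Dx hx raddf0.
- by rewrite Lap_u_U_Dx hu hd raddf0 !addr0.
- by rewrite Du_Dx_U_Dx hd hx raddf0 addr0.
Qed.

Lemma iter_S_u j p : ker_laplacians p -> iter j (@S_u m) p = iter j (@U_Dx m) p.
Proof.
move=> hp; elim: j => //= j ->.
have [hx hu _] : ker_laplacians (iter j.+1 (@U_Dx m) p).
  by elim: j.+1 => //= i; apply: ker_laplacians_U_Dx.
by rewrite /S_u pi_s_id.
Qed.

End SimplicialProjection.

Section Sl2Orbit.
Variables (m k l : nat) (H : Pol m).
Hypothesis hH : Hkl k l H.
Local Notation F := (@U_Dx m).

Lemma euler_x_iter j : euler_x (iter j F H) = (k%:R - j%:R) *: iter j F H.
Proof.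
elim: j => [|j IH] /=; first by rewrite subr0; case: hH => /euler_x_bihomog.
by rewrite euler_x_U_Dx IH linearZ /= -[X in _ - X]scale1r -scalerBl -natr1 opprD addrA.
Qed.

Lemma euler_u_iter j : euler_u (iter j F H) = (l%:R + j%:R) *: iter j F H.
Proof.
elim: j => [|j IH] /=; first by rewrite addr0; case: hH => /euler_u_bihomog.
by rewrite euler_u_U_Dx IH linearZ /= -[X in _ + X]scale1r -scalerDl -natr1 addrA.
Qed.

Lemma X_Du_iter j :
  X_Du (iter j.+1 F H) = (j.+1%:R * (k%:R - l%:R - j%:R)) *: iter j F H.
Proof.
elim: j => [|j IH]; rewrite iterS X_Du_U_Dx.
  case: hH => _ [_ [_ [_ ->]]].
  by rewrite raddf0 add0r (euler_x_iter 0) (euler_u_iter 0) -scalerBl /=; congr (_ *: _); ring.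
rewrite IH linearZ euler_x_iter euler_u_iter -scalerDl -scalerBl.
by congr (_ *: _); rewrite -!natr1; ring.
Qed.

Lemma iter_U_Dx_neq0 j : H != 0 -> (j <= k - l)%N -> iter j F H != 0.
Proof.
move=> H0; elim: j => [//|j IH] hj.
have hlk : (l <= k)%N by apply: ltnW; rewrite -subn_gt0 (leq_ltn_trans (leq0n j) hj).
have hc : (j.+1%:R * (k%:R - l%:R - j%:R) : C) != 0.
  rewrite -natrB // -natrB ?(ltnW hj) // -natrM pnatr_eq0 muln_eq0 subn_eq0.
  by rewrite -ltnNge hj.
apply: contra_neq (IH (ltnW hj)) => hj0.
by move: (X_Du_iter j); rewrite hj0 raddf0 => /esym/eqP; rewrite scaler_eq0 (negbTE hc) => /eqP.
Qed.

Lemma iter_U_Dx_vanish : (l <= k)%N -> iter (k - l).+1 F H = 0.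
Proof.
move=> hlk; set G := iter (k - l).+1 F H.
have EG : X_Du G = 0 by rewrite /G X_Du_iter -natrB // subrr mulr0 scale0r.
have hG : fdot (F G) (F G) = - ((k - l).+2)%:R * fdot G G.
  rewrite fischer_U_Dx X_Du_U_Dx EG raddf0 add0r /G euler_x_iter euler_u_iter -/G.
  rewrite -scalerBl fischerZr; congr (_ * _).
  by rewrite !rmorphB !rmorphD /= !conjC_nat -!natr1 !natrB //; ring.
apply/eqP; rewrite -fischer_eq0 eq_le fischer_ge0 andbT.
by have := fischer_ge0 (F G); rewrite hG mulNr oppr_ge0 pmulr_rle0 ?ltr0n.
Qed.

End Sl2Orbit.

Section Bihomogeneous.
Variable m : nat.
Implicit Types (p q : Pol m).

Lemma bihomogM d e d' e' p q : bihomog d e p -> bihomog d' e' q ->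
  bihomog (d + d') (e + e') (p * q).
Proof.
move=> hp hq mn /msuppM_le /allpairsP [[m1 m2] /= [h1 h2 ->]].
have [a1 a2] := hp _ h1; have [b1 b2] := hq _ h2.
by split; rewrite -?a1 -?b1 -?a2 -?b2 -big_split; apply: eq_bigr => i _; rewrite mnmDE.
Qed.

Lemma bihomogB d e p q : bihomog d e p -> bihomog d e q -> bihomog d e (p - q).
Proof. by move=> hp hq mn /msuppB_le; rewrite mem_cat => /orP[/hp|/hq]. Qed.

Lemma bihomog1 : bihomog 0 0 (1 : Pol m).
Proof.
move=> mn; rewrite msupp1 mem_seq1 => /eqP ->.
by split; rewrite big1 // => i _; rewrite mnm0E.
Qed.

Lemma bihomogX d e p j : bihomog d e p -> bihomog (d * j) (e * j) (p ^+ j).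
Proof.
move=> hp; elim: j => [|j IH]; first by rewrite !muln0 expr0; exact: bihomog1.
by rewrite exprS !mulnS; apply: bihomogM.
Qed.

End Bihomogeneous.

Section LinearForms.
Variable m : nat.
Local Notation P := (Pol m).

Definition var (b : bool) (j : 'I_m) : 'I_(m + m) := if b then xi j else ui j.
Definition lform (b : bool) (c : 'I_m -> C) : P := \sum_(j < m) c j *: 'X_(var b j).
Definition dotv (c d : 'I_m -> C) : C := \sum_(j < m) c j * d j.

Lemma eq_var b b' i j : (var b i == var b' j) = (b == b') && (i == j).
Proof. by case: b; case: b' => /=; rewrite ?eq_xi ?eq_ui ?eq_xi_ui ?eq_ui_xi. Qed.

Lemma mderiv_lform b b' j c :
  mderiv (var b j) (lform b' c) = c j *: ((b' == b)%:R : P).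
Proof.
rewrite /lform mderiv_sum (bigD1 j) //= big1 => [|i ij].
  by rewrite mderivZ mderivXi eq_var eqxx andbT addr0.
by rewrite mderivZ mderivXi eq_var (negbTE ij) andbF scaler0.
Qed.

Lemma dgamma_lform s t b b' c d : dotv c d = 0 ->
  dgamma (var s) (var t) (lform b c) (lform b' d) = 0.
Proof.
move=> hcd; rewrite /dgamma.
under eq_bigr do rewrite !mderiv_lform -!scalerAl -!scalerAr !scalerA -scalerDr.
by rewrite -scaler_suml -/(dotv c d) hcd scale0r.
Qed.

Lemma dlap_lform s t b c : dlap (var s) (var t) (lform b c) = 0.
Proof.
rewrite /dlap big1 // => j _.
by rewrite mderiv_lform mderivZ -mpolyC_nat mderivC scaler0.
Qed.

Lemma bihomog_lform (b : bool) c : bihomog b (~~ b) (lform b c).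
Proof.
move=> mn /msupp_sum_le /flattenP [s /mapP [j _ ->]] /msuppZ_le.
rewrite msuppX mem_seq1 => /eqP ->.
have sum_var b' : (\sum_(i < m) (U_(var b j))%MM (var b' i))%N = (b == b').
  rewrite (bigD1 j) //= big1 => [|i ij]; first by rewrite mnm1E eq_var eqxx andbT addn0.
  by rewrite mnm1E eq_var [j == _]eq_sym (negbTE ij) andbF.
by rewrite (sum_var true) (sum_var false) eqb_id eqbF_neg.
Qed.

End LinearForms.

Arguments bihomog_lform {m} b c.

Section Witness.
Variable m : nat.
Hypothesis hm : (3 < m)%N.
Local Notation P := (Pol m).
Implicit Types (p q : P) (c d : 'I_m -> C).

Lemma X_DuM p q : X_Du (p * q) = X_Du p * q + p * X_Du q.
Proof.
rewrite /X_Du mulr_suml mulr_sumr -big_split /=; apply: eq_bigr => j _.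
by rewrite /du mderivM; ring.
Qed.

Lemma X_DuX p j : X_Du p = 0 -> X_Du (p ^+ j) = 0.
Proof.
move=> hp; elim: j => [|j IH].
  by rewrite expr0 /X_Du big1 // => j _; rewrite /du mderiv1 mulr0.
by rewrite exprS X_DuM hp IH mul0r mulr0 addr0.
Qed.

Lemma X_Du_lform b c : X_Du (lform b c) = if b then 0 else lform true c.
Proof.
rewrite /X_Du; case: b.
  by rewrite big1 // => j _; rewrite /du (mderiv_lform false) /= scaler0 mulr0.
by apply: eq_bigr => j _; rewrite /du (mderiv_lform false) /= -scalerAr mulr1.
Qed.

Definition va (j : 'I_m) : C := if val j == 0%N then 1 else if val j == 1%N then 'i else 0.
Definition vb (j : 'I_m) : C := if val j == 2%N then 1 else if val j == 3%N then 'i else 0.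

Lemma sum_indicator_ord (c : nat) : (c < m)%N -> \sum_(j < m) ((val j == c)%:R : C) = 1.
Proof.
move=> h; rewrite (bigD1 (Ordinal h)) //= eqxx big1 ?addr0 // => j hj.
by case: eqP => // hc; case/negP: hj; apply/eqP/val_inj.
Qed.

Lemma dotv_va_va : dotv va va = 0.
Proof.
rewrite /dotv (eq_bigr (fun j => ((val j == 0%N)%:R - (val j == 1%N)%:R : C))).
  by rewrite sumrB !sum_indicator_ord ?subrr // (ltn_trans _ hm).
by move=> [[|[|j]] hj] _; rewrite /va /= ?mulr1 ?mul0r ?subr0 ?sub0r ?subrr // -expr2 sqrCi.
Qed.

Lemma dotv_vb_vb : dotv vb vb = 0.
Proof.
rewrite /dotv (eq_bigr (fun j => ((val j == 2%N)%:R - (val j == 3%N)%:R : C))).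
  by rewrite sumrB !sum_indicator_ord ?subrr // (ltn_trans _ hm).
by move=> [[|[|[|[|j]]]] hj] _; rewrite /vb /= ?mulr1 ?mul0r ?subr0 ?sub0r ?subrr // -expr2 sqrCi.
Qed.

Lemma dotv_va_vb : dotv va vb = 0.
Proof. by rewrite /dotv big1 // => -[[|[|[|[|j]]]] hj] _; rewrite /va /vb /= ?mulr0 ?mul0r. Qed.

Lemma dotvC c d : dotv c d = dotv d c.
Proof. by apply: eq_bigr => j _; rewrite mulrC. Qed.

Definition isotropic_form (g : P) : Prop :=
  exists b c, (c = va \/ c = vb) /\ g = lform b c.

Lemma dlap_isotropic s t p :
  generated isotropic_form p -> dlap (var s) (var t) p = 0.
Proof.
apply: dlap_generated => [g g' [b [c [hc ->]]] [b' [d [hd ->]]]|g [b [c [_ ->]]]].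
  apply: dgamma_lform.
  by case: hc hd => -> [] ->; rewrite ?dotv_va_va ?dotv_vb_vb ?dotv_va_vb // dotvC dotv_va_vb.
exact: dlap_lform.
Qed.

Definition detab : P := lform true va * lform false vb - lform true vb * lform false va.
Lemma bihomog_detab : bihomog 1 1 detab.
Proof. by apply: bihomogB; apply: (bihomogM (bihomog_lform true _) (bihomog_lform false _)). Qed.

Definition Hwitness (k l : nat) : P := lform true va ^+ (k - l) * detab ^+ l.

Lemma Hkl_witness k l : (l <= k)%N -> Hkl k l (Hwitness k l).
Proof.
move=> hlk.
have iso b c : c = va \/ c = vb -> generated isotropic_form (lform b c).
  by move=> hc; apply: generated_gen; exists b, c.
have gen_H : generated isotropic_form (Hwitness k l).
  apply: generatedM; apply: generatedX; first by apply: iso; left.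
  by apply: generatedB; apply: generatedM; apply: iso; (left + right).
have X_Du_detab : X_Du detab = 0.
  by rewrite /detab raddfB /= !X_DuM !X_Du_lform !mul0r !add0r mulrC subrr.
split.
  have := bihomogM (bihomogX (j := k - l) (bihomog_lform true va)) (bihomogX (j := l) bihomog_detab).
  by rewrite /= !mul1n mul0n add0n subnK.
split; first exact: (dlap_isotropic true true gen_H).
split; first exact: (dlap_isotropic false false gen_H).
split; first exact: (dlap_isotropic false true gen_H).
by rewrite X_DuM X_DuX ?X_Du_lform // X_DuX // mul0r mulr0 addr0.
Qed.

Lemma Hwitness_neq0 k l : Hwitness k l != 0.
Proof.
pose i0 : 'I_m := Ordinal (ltn_trans (isT : 0 < 3)%N hm).
pose i2 : 'I_m := Ordinal (ltnW hm).
have va_neq0 : lform true va != 0.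
  apply: contra_neq (@oner_neq0 P) => h.
  by move: (mderiv_lform true true i0 va); rewrite h mderiv0 /va /= scale1r.
have detab_neq0 : detab != 0.
  apply: contra_neq (@oner_neq0 P) => h.
  move: (congr1 (fun p => mderiv (var false i2) (mderiv (var true i0) p)) h).
  rewrite /detab mderiv0 !(mderivB, mderivM) !mderiv_lform.
  rewrite !(mderivZ, mderivD, mderivM) !mderiv_lform /va /vb /= !mderiv1 mderiv0.
  by rewrite !(scale0r, scale1r, scaler0, mul0r, mulr0, mul1r, add0r, addr0, subr0).
by rewrite mulf_neq0 // expf_neq0.
Qed.

End Witness.

Theorem lemma4p1 (m : nat) (hm : (4 < m)%N) (k l : nat) (hlk : (l <= k)%N) :
  (forall H : Pol m, Hkl k l H -> iter (k - l + 1) (@S_u m) H = 0) /\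
  (forall j : nat, (j <= k - l)%N ->
     exists H : Pol m, Hkl k l H /\ iter j (@S_u m) H <> 0).
Proof.
have ker H : Hkl k l H -> ker_laplacians H by case=> _ [hx [hu [hd _]]].
split=> [H hH | j hj].
  by rewrite addn1 iter_S_u ?(iter_U_Dx_vanish hH) //; apply: ker.
have hH := Hkl_witness (ltnW hm) hlk.
exists (Hwitness m k l); split=> //.
rewrite iter_S_u; last exact: ker.
by apply/eqP/(iter_U_Dx_neq0 hH) => //; apply: Hwitness_neq0; exact: ltnW.
Qed.
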